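(* Let $\omega_n>0$, $0\le\zeta<1$, $\omega_0=\omega_n\sqrt{1-\zeta^2}$, $T>0$, $s_0\in\mathbb{R}$, and let $N_\tau=\exp\!\left(\tau\begin{pmatrix}0&1\\-\omega_n^2&-2\zeta\omega_n\end{pmatrix}\right)$. Put $N_1=N_{s_0}$, $N_2=N_{T-s_0}$, and for $\alpha\in\mathbb{R}$ let $$J=N_2\begin{pmatrix}1&0\\ \alpha&1\end{pmatrix}N_1.$$ Then $$\operatorname{Tr}(J)=\operatorname{Tr}(N_2N_1)+\alpha\, e^{-\zeta\omega_n T}\,\frac{\sin(\omega_0 T)}{\omega_0},\qquad \det J=\det N_2\det N_1=e^{-2\zeta\omega_n T}.$$ Consequently, if $T=2\pi/\omega_f$ and $\omega_0\neq m\omega_f/2$ for all integers $m$, then the coefficient of $\alpha$ in $\operatorname{Tr}(J)$ is nonzero; in particular, when $\alpha=\dfrac{w_2h_1\sqrt{2a^*}}{2\sqrt{-H_{\min}}}$ with $w_2h_1\neq 0$, $a^*>0$, the trace of $J$ diverges like $(-H_{\min})^{-1/2}$ as $H_{\min}\to 0^-$, while the determinant stays constant.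
   Context: Setting: a forced impact oscillator $\ddot u+2\zeta\omega_n\dot u+\omega_n^2 u=g(t)$ for $u<\sigma$, with $g$ of period $T$ (angular frequency $\omega_f$), hard wall at $u=\sigma$ with $H(u,v)=\sigma-u$, $h_1=\partial H/\partial u$, reset map $\mathbf x\mapsto\mathbf x+W\,v(\mathbf x)$ with $W=(0\;\;w_2)^T$, $a^*>0$ the normal acceleration at the grazing point, and $H_{\min}<0$ the minimum of $H$ along the unconstrained trajectory near a grazing periodic orbit. The orbit takes time $s_0$ from the stroboscopic Poincaré section to the wall and $T-s_0$ back; $J$ is the Jacobian of the stroboscopic map near grazing, with $\begin{pmatrix}1&0\\ \alpha&1\end{pmatrix}$ the Jacobian of the zero-time discontinuity mapping. *)

From Stdlib Require Import Reals Lra ZArith.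
Open Scope R_scope.

Record M2 := mkM2 { m11 : R; m12 : R; m21 : R; m22 : R }.

Definition M2id : M2 := mkM2 1 0 0 1.

Definition M2add (A B : M2) : M2 :=
  mkM2 (m11 A + m11 B) (m12 A + m12 B) (m21 A + m21 B) (m22 A + m22 B).

Definition M2scal (c : R) (A : M2) : M2 :=
  mkM2 (c * m11 A) (c * m12 A) (c * m21 A) (c * m22 A).

Definition M2mul (A B : M2) : M2 :=
  mkM2 (m11 A * m11 B + m12 A * m21 B) (m11 A * m12 B + m12 A * m22 B)
       (m21 A * m11 B + m22 A * m21 B) (m21 A * m12 B + m22 A * m22 B).

Fixpoint M2pow (A : M2) (k : nat) : M2 :=
  match k with
  | O => M2id
  | S k' => M2mul A (M2pow A k')
  end.

Definition M2tr (A : M2) : R := m11 A + m22 A.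
Definition M2det (A : M2) : R := m11 A * m22 A - m12 A * m21 A.

Fixpoint M2expSum (A : M2) (n : nat) : M2 :=
  match n with
  | O => M2id
  | S n' => M2add (M2expSum A n') (M2scal (/ INR (fact (S n'))) (M2pow A (S n')))
  end.

Definition is_M2exp (A E : M2) : Prop :=
  Un_cv (fun n => m11 (M2expSum A n)) (m11 E) /\
  Un_cv (fun n => m12 (M2expSum A n)) (m12 E) /\
  Un_cv (fun n => m21 (M2expSum A n)) (m21 E) /\
  Un_cv (fun n => m22 (M2expSum A n)) (m22 E).

Definition sysA (wn zeta : R) : M2 := mkM2 0 1 (- wn ^ 2) (- 2 * zeta * wn).

(* Jacobian of the zero-time discontinuity mapping ( 1 0 ; alpha 1 ). *)
Definition Dmat (alpha : R) : M2 := mkM2 1 0 alpha 1.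

Definition Jmat (N1 N2 : M2) (alpha : R) : M2 := M2mul N2 (M2mul (Dmat alpha) N1).

From Stdlib Require Import Reals Lra Lia ZArith.
From Coquelicot Require Import Coquelicot.
Open Scope R_scope.

(* By Cayley-Hamilton, every power of A = [[0, 1], [-W, -C]] is p I + q A, so
   exp (s A) = P(s) I + Q(s) A where P, Q are entire power series solving
   P' = -W Q, Q' = P - C Q.  When C^2 < 4 W this linear system has the
   positive-definite first integral e^(C t) (P^2 - C P Q + W Q^2), hence unique
   solutions, and with C = -2a, W = a^2 + b^2 they are the damped oscillations
   P = e^(a s) (cos bs - (a/b) sin bs), Q = e^(a s) sin(bs) / b.  These closed
   forms compose as a one-parameter group of determinant e^(2 a s).  Since
   D(alpha) = I + alpha E21, tr (N2 D N1) = tr (N2 N1) + alpha (N1 N2)_12 and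
   (N1 N2)_12 = Q(T) = e^(-zeta wn T) sin(w0 T) / w0, which is nonzero exactly
   when 2 w0 / wf is not an integer; the trace then grows like alpha, i.e. like
   (-Hmin)^(-1/2), while det J = e^(-2 zeta wn T). *)

Definition companion (W C : R) : M2 := mkM2 0 1 (- W) (- C).

Definition companion_comb (W C p q : R) : M2 :=
  M2add (M2scal p M2id) (M2scal q (companion W C)).

Lemma companion_combE W C p q :
  companion_comb W C p q = mkM2 p q (- W * q) (p - C * q).
Proof.
  unfold companion_comb, companion, M2add, M2scal, M2id; cbn [m11 m12 m21 m22].
  f_equal; ring.
Qed.

Fixpoint companion_coef (W C : R) (k : nat) : R * R :=
  match k with
  | O => (1, 0)
  | S k' => (- W * snd (companion_coef W C k'),
             fst (companion_coef W C k') - C * snd (companion_coef W C k'))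
  end.

Definition pcoef W C k := fst (companion_coef W C k).
Definition qcoef W C k := snd (companion_coef W C k).

Lemma M2pow_companion W C k :
  M2pow (companion W C) k = companion_comb W C (pcoef W C k) (qcoef W C k).
Proof.
  rewrite companion_combE.
  induction k as [|k IH]; cbn [M2pow].
  - unfold M2id, pcoef, qcoef; simpl; f_equal; ring.
  - rewrite IH. unfold M2mul, companion, pcoef, qcoef; cbn. f_equal; ring.
Qed.

Lemma M2pow_scal s A k : M2pow (M2scal s A) k = M2scal (s ^ k) (M2pow A k).
Proof.
  induction k as [|k IH]; cbn [M2pow pow].
  - unfold M2id, M2scal; cbn; f_equal; ring.
  - rewrite IH. destruct A, (M2pow _ k). unfold M2mul, M2scal; cbn. f_equal; ring.
Qed.

Definition exp_partial (x : nat -> R) (s : R) (n : nat) : R :=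
  sum_f_R0 (fun k => x k / INR (fact k) * s ^ k) n.

Lemma M2expSum_companion W C s n :
  M2expSum (M2scal s (companion W C)) n =
  companion_comb W C (exp_partial (pcoef W C) s n) (exp_partial (qcoef W C) s n).
Proof.
  rewrite companion_combE.
  induction n as [|n IH]; cbn [M2expSum].
  - unfold exp_partial, M2id, pcoef, qcoef; simpl; f_equal; field.
  - rewrite IH, M2pow_scal, M2pow_companion, companion_combE.
    unfold exp_partial; rewrite !tech5.
    unfold M2add, M2scal; cbn [m11 m12 m21 m22]. f_equal; unfold Rdiv; ring.
Qed.

Lemma companion_coef_bound W C k :
  Rabs (pcoef W C k) <= (1 + Rabs W + Rabs C) ^ k /\
  Rabs (qcoef W C k) <= (1 + Rabs W + Rabs C) ^ k.
Proof.
  set (K := 1 + Rabs W + Rabs C).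
  assert (HW := Rabs_pos W); assert (HC := Rabs_pos C).
  induction k as [|k [IHp IHq]].
  - unfold pcoef, qcoef; simpl; rewrite Rabs_R1, Rabs_R0; split; lra.
  - assert (HKk : 0 <= K ^ k) by (apply pow_le; unfold K; lra).
    unfold pcoef, qcoef in *; cbn [companion_coef fst snd pow].
    split.
    + rewrite Rabs_mult, Rabs_Ropp.
      apply Rle_trans with (Rabs W * K ^ k); [apply Rmult_le_compat_l; lra|].
      apply Rmult_le_compat_r; [lra | unfold K; lra].
    + eapply Rle_trans; [apply Rabs_triang|]. rewrite Rabs_Ropp, Rabs_mult.
      assert (Rabs C * Rabs (snd (companion_coef W C k)) <= Rabs C * K ^ k)
        by (apply Rmult_le_compat_l; lra).
      assert ((1 + Rabs C) * K ^ k <= K * K ^ k)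
        by (apply Rmult_le_compat_r; [lra | unfold K; lra]).
      lra.
Qed.

Lemma Rabs_lt_CV_radius_fact (x : nat -> R) K :
  0 <= K -> (forall k, Rabs (x k) <= K ^ k) ->
  forall y, Rbar_lt (Rabs y) (CV_radius (fun k => x k / INR (fact k))).
Proof.
  intros HK Hx y.
  set (r := Rabs y + 1).
  assert (Hr : 0 <= r) by (unfold r; generalize (Rabs_pos y); lra).
  assert (Hbnd : exists M, forall n, Rabs (x n / INR (fact n) * r ^ n) <= M).
  { exists (exp (K * r)). intro n.
    assert (Hf : 0 < INR (fact n)) by apply INR_fact_lt_0.
    rewrite Rabs_mult, Rabs_div, (Rabs_right (INR (fact n))), (Rabs_right (r ^ n))
      by (try apply Rle_ge, pow_le; lra).
    apply Rle_trans with ((K * r) ^ n / INR (fact n)).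
    - rewrite Rpow_mult_distr.
      replace (Rabs (x n) / INR (fact n) * r ^ n)
        with (Rabs (x n) * (r ^ n / INR (fact n))) by (field; lra).
      replace (K ^ n * r ^ n / INR (fact n))
        with (K ^ n * (r ^ n / INR (fact n))) by (field; lra).
      apply Rmult_le_compat_r; [apply Rdiv_le_0_compat; [apply pow_le|]; lra | apply Hx].
    - (* a single Taylor term of exp (K r) is bounded by exp (K r) *)
      eapply Rle_trans; [| apply (exp_ge_taylor (K * r) n); apply Rmult_le_pos; lra].
      destruct n as [|n]; [simpl; lra|]. rewrite tech5.
      assert (0 <= sum_f_R0 (fun k => (K * r) ^ k / INR (fact k)) n); [|lra].
      apply cond_pos_sum; intro k. apply Rmult_le_pos; [apply pow_le, Rmult_le_pos; lra|].
      left; apply Rinv_0_lt_compat, INR_fact_lt_0. }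
  destruct (CV_radius_bounded (fun k => x k / INR (fact k))) as [Hub _].
  specialize (Hub r Hbnd).
  destruct (CV_radius _); simpl in *; unfold r in *; lra || auto.
Qed.

Lemma exp_partial_cv (x : nat -> R) s :
  ex_pseries (fun k => x k / INR (fact k)) s ->
  is_lim_seq (exp_partial x s) (PSeries (fun k => x k / INR (fact k)) s).
Proof.
  intro H. apply PSeries_correct in H.
  eapply is_lim_seq_ext; [|exact H].
  intro n. rewrite sum_n_Reals. unfold exp_partial. apply sum_eq. intros i _.
  rewrite pow_n_pow. unfold scal; simpl; unfold mult; simpl. ring.
Qed.

Lemma INR_S_div_fact_S x n : INR (S n) * (x / INR (fact (S n))) = x / INR (fact n).
Proof.
  rewrite fact_simpl, mult_INR. field.
  split; [apply INR_fact_neq_0 | apply not_0_INR; lia].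
Qed.

Section CompanionSeries.

Variables W C : R.

Definition pser : R -> R := PSeries (fun k => pcoef W C k / INR (fact k)).
Definition qser : R -> R := PSeries (fun k => qcoef W C k / INR (fact k)).

Lemma pser_radius y : Rbar_lt (Rabs y) (CV_radius (fun k => pcoef W C k / INR (fact k))).
Proof.
  apply (Rabs_lt_CV_radius_fact _ (1 + Rabs W + Rabs C)).
  - generalize (Rabs_pos W) (Rabs_pos C); lra.
  - intro k; apply companion_coef_bound.
Qed.

Lemma qser_radius y : Rbar_lt (Rabs y) (CV_radius (fun k => qcoef W C k / INR (fact k))).
Proof.
  apply (Rabs_lt_CV_radius_fact _ (1 + Rabs W + Rabs C)).
  - generalize (Rabs_pos W) (Rabs_pos C); lra.
  - intro k; apply companion_coef_bound.
Qed.

Lemma is_derive_pser x : is_derive pser x (- W * qser x).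
Proof.
  replace (- W * qser x)
    with (PSeries (PS_derive (fun k => pcoef W C k / INR (fact k))) x).
  - apply is_derive_PSeries, pser_radius.
  - unfold qser. rewrite <- PSeries_scal. apply PSeries_ext. intro n.
    unfold PS_derive, PS_scal. rewrite INR_S_div_fact_S.
    unfold scal; simpl; unfold mult; simpl. unfold pcoef, qcoef; simpl. field.
    apply INR_fact_neq_0.
Qed.

Lemma is_derive_qser x : is_derive qser x (pser x - C * qser x).
Proof.
  replace (pser x - C * qser x)
    with (PSeries (PS_derive (fun k => qcoef W C k / INR (fact k))) x).
  - apply is_derive_PSeries, qser_radius.
  - unfold pser, qser.
    transitivity (PSeries (PS_plus (fun k => pcoef W C k / INR (fact k))
                             (PS_scal (- C) (fun k => qcoef W C k / INR (fact k)))) x).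
    + apply PSeries_ext. intro n.
      unfold PS_derive, PS_plus, PS_scal. rewrite INR_S_div_fact_S.
      unfold scal, plus; simpl; unfold mult, plus; simpl. unfold pcoef, qcoef; simpl.
      field. apply INR_fact_neq_0.
    + rewrite PSeries_plus, PSeries_scal; [ring| |].
      * apply CV_radius_inside, pser_radius.
      * apply ex_pseries_scal; [apply Rmult_comm | apply CV_radius_inside, qser_radius].
Qed.

Lemma pser0 : pser 0 = 1.
Proof.
  unfold pser. rewrite PSeries_decr_1 by apply CV_radius_inside, pser_radius.
  unfold pcoef; simpl. field.
Qed.

Lemma qser0 : qser 0 = 0.
Proof.
  unfold qser. rewrite PSeries_decr_1 by apply CV_radius_inside, qser_radius.
  unfold qcoef; simpl. field.
Qed.

Lemma is_M2exp_companion s N :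
  is_M2exp (M2scal s (companion W C)) N -> N = companion_comb W C (pser s) (qser s).
Proof.
  intros [H11 [H12 [H21 H22]]].
  apply is_lim_seq_Reals in H11, H12, H21, H22.
  assert (Hp : is_lim_seq (exp_partial (pcoef W C) s) (pser s))
    by apply exp_partial_cv, CV_radius_inside, pser_radius.
  assert (Hq : is_lim_seq (exp_partial (qcoef W C) s) (qser s))
    by apply exp_partial_cv, CV_radius_inside, qser_radius.
  assert (Hlim : forall (u : nat -> R) (l1 l2 : R),
             is_lim_seq u l1 -> is_lim_seq u l2 -> l1 = l2).
  { intros u l1 l2 H1 H2. apply is_lim_seq_unique in H1, H2.
    rewrite H1 in H2. now injection H2. }
  assert (HS : forall n, M2expSum (M2scal s (companion W C)) n =
    companion_comb W C (exp_partial (pcoef W C) s n) (exp_partial (qcoef W C) s n))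
    by apply M2expSum_companion.
  setoid_rewrite companion_combE in HS.
  rewrite companion_combE. destruct N as [n11 n12 n21 n22]; cbn in *.
  f_equal.
  - apply (Hlim _ _ _ H11). eapply is_lim_seq_ext; [|exact Hp].
    intro n; rewrite HS; reflexivity.
  - apply (Hlim _ _ _ H12). eapply is_lim_seq_ext; [|exact Hq].
    intro n; rewrite HS; reflexivity.
  - apply (Hlim _ _ _ H21).
    eapply is_lim_seq_ext; [|exact (is_lim_seq_scal_l _ (- W) _ Hq)].
    intro n; rewrite HS; reflexivity.
  - apply (Hlim _ _ _ H22).
    eapply is_lim_seq_ext; [|exact (is_lim_seq_minus' _ _ _ _ Hp (is_lim_seq_scal_l _ C _ Hq))].
    intro n; rewrite HS; reflexivity.
Qed.

End CompanionSeries.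

Lemma is_derive_0_const (f : R -> R) :
  (forall x, is_derive f x 0) -> forall x, f x = f 0.
Proof.
  intros Hf x.
  destruct (MVT_cor4 f (fun _ => 0) 0 (Rabs x) (fun c _ => Hf c) x) as [c [Hc _]].
  - rewrite Rminus_0_r; apply Rle_refl.
  - lra.
Qed.

Lemma companion_ode_zero W C (u v : R -> R) :
  C ^ 2 < 4 * W ->
  (forall x, is_derive u x (- W * v x)) -> (forall x, is_derive v x (u x - C * v x)) ->
  u 0 = 0 -> v 0 = 0 -> forall x, u x = 0 /\ v x = 0.
Proof.
  intros HCW Hu Hv Hu0 Hv0 x.
  (* the damped energy  e^(Ct) (u^2 - C u v + W v^2)  is a first integral *)
  set (E := fun t => exp (C * t) * (u t ^ 2 - C * u t * v t + W * v t ^ 2)).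
  assert (HE : forall t, is_derive E t 0).
  { intro t. unfold E. auto_derive.
    - repeat first [split | eexists; apply Hu | eexists; apply Hv].
    - replace (Derive (fun y => u y) t) with (- W * v t)
        by (symmetry; apply is_derive_unique, Hu).
      replace (Derive (fun y => v y) t) with (u t - C * v t)
        by (symmetry; apply is_derive_unique, Hv).
      ring. }
  assert (HQ : u x ^ 2 - C * u x * v x + W * v x ^ 2 = 0).
  { assert (HEx := is_derive_0_const E HE x).
    unfold E in HEx. rewrite Hu0, Hv0, Rmult_0_r, exp_0 in HEx.
    apply Rmult_eq_reg_l with (exp (C * x)); [|apply Rgt_not_eq, exp_pos].
    rewrite HEx. ring. }
  (* the energy is positive definite:
     4 W (u^2 - C u v + W v^2) = (2 W v - C u)^2 + (4 W - C^2) u^2 *)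
  assert (HW : 0 < W) by nra.
  assert (H4 : (2 * W * v x - C * u x) ^ 2 + (4 * W - C ^ 2) * u x ^ 2 = 0)
    by (rewrite <- (Rmult_0_r (4 * W)), <- HQ; ring).
  assert (Hux : u x = 0).
  { assert (H0 := pow2_ge_0 (2 * W * v x - C * u x)).
    assert (Hu2 : (4 * W - C ^ 2) * u x ^ 2 = 0)
      by (apply Rle_antisym; [lra | apply Rmult_le_pos; [lra | apply pow2_ge_0]]).
    apply Rmult_integral in Hu2 as [Hu2 | Hu2]; [lra | nra]. }
  split; [exact Hux|].
  assert (Hv2 : W * (v x * v x) = 0) by (rewrite <- HQ, Hux; ring).
  apply Rmult_integral in Hv2 as [Hv2 | Hv2]; [lra | now apply Rsqr_0_uniq].
Qed.

Lemma companion_ode_unique W C (u1 v1 u2 v2 : R -> R) :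
  C ^ 2 < 4 * W ->
  (forall x, is_derive u1 x (- W * v1 x)) -> (forall x, is_derive v1 x (u1 x - C * v1 x)) ->
  (forall x, is_derive u2 x (- W * v2 x)) -> (forall x, is_derive v2 x (u2 x - C * v2 x)) ->
  u1 0 = u2 0 -> v1 0 = v2 0 -> forall x, u1 x = u2 x /\ v1 x = v2 x.
Proof.
  intros HCW Hu1 Hv1 Hu2 Hv2 Hu0 Hv0 x.
  destruct (companion_ode_zero W C (fun t => u1 t - u2 t) (fun t => v1 t - v2 t) HCW)
    with (x := x) as [Hu Hv]; [| |lra|lra|lra].
  - intro t. replace (- W * (v1 t - v2 t)) with (- W * v1 t - - W * v2 t) by ring.
    exact (is_derive_minus u1 u2 t _ _ (Hu1 t) (Hu2 t)).
  - intro t. replace (u1 t - u2 t - C * (v1 t - v2 t))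
      with ((u1 t - C * v1 t) - (u2 t - C * v2 t)) by ring.
    exact (is_derive_minus v1 v2 t _ _ (Hv1 t) (Hv2 t)).
Qed.

Definition damped_p (a b s : R) : R := exp (a * s) * (cos (b * s) - a / b * sin (b * s)).
Definition damped_q (a b s : R) : R := exp (a * s) * sin (b * s) / b.

Definition damped_flow (a b s : R) : M2 :=
  companion_comb (a ^ 2 + b ^ 2) (- 2 * a) (damped_p a b s) (damped_q a b s).

Lemma companion_series_damped a b s : b <> 0 ->
  pser (a ^ 2 + b ^ 2) (- 2 * a) s = damped_p a b s /\
  qser (a ^ 2 + b ^ 2) (- 2 * a) s = damped_q a b s.
Proof.
  intro Hb.
  apply (companion_ode_unique (a ^ 2 + b ^ 2) (- 2 * a) (pser _ _) (qser _ _)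
           (damped_p a b) (damped_q a b)).
  - assert (0 < b ^ 2) by (apply pow2_gt_0; exact Hb). nra.
  - apply is_derive_pser.
  - apply is_derive_qser.
  - intro t. unfold damped_p, damped_q. auto_derive; [easy|field; exact Hb].
  - intro t. unfold damped_p, damped_q. auto_derive; [easy|field; exact Hb].
  - rewrite pser0. unfold damped_p. rewrite !Rmult_0_r, exp_0, cos_0, sin_0. ring.
  - rewrite qser0. unfold damped_q. rewrite !Rmult_0_r, exp_0, sin_0. field; exact Hb.
Qed.

Lemma is_M2exp_damped a b s N : b <> 0 ->
  is_M2exp (M2scal s (companion (a ^ 2 + b ^ 2) (- 2 * a))) N -> N = damped_flow a b s.
Proof.
  intros Hb HN. apply is_M2exp_companion in HN.
  destruct (companion_series_damped a b s Hb) as [Hp Hq].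
  now rewrite HN, Hp, Hq.
Qed.

Lemma damped_flow_add a b s t : b <> 0 ->
  M2mul (damped_flow a b s) (damped_flow a b t) = damped_flow a b (s + t).
Proof.
  intro Hb. unfold damped_flow. rewrite !companion_combE.
  unfold M2mul, damped_p, damped_q; cbn [m11 m12 m21 m22].
  rewrite !Rmult_plus_distr_l, exp_plus, cos_plus, sin_plus.
  f_equal; field; exact Hb.
Qed.

Lemma M2det_damped_flow a b s : b <> 0 -> M2det (damped_flow a b s) = exp (2 * a * s).
Proof.
  intro Hb. unfold damped_flow. rewrite companion_combE.
  unfold M2det, damped_p, damped_q; cbn [m11 m12 m21 m22].
  replace (2 * a * s) with (a * s + a * s) by ring. rewrite exp_plus.
  transitivity (exp (a * s) * exp (a * s) * (sin (b * s) ^ 2 + cos (b * s) ^ 2)).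
  - field; exact Hb.
  - rewrite <- Rsqr_pow2, <- Rsqr_pow2, sin2_cos2. ring.
Qed.

Lemma M2tr_Jmat N1 N2 alpha :
  M2tr (Jmat N1 N2 alpha) = M2tr (M2mul N2 N1) + alpha * m12 (M2mul N1 N2).
Proof. destruct N1, N2. unfold M2tr, Jmat, M2mul, Dmat; cbn. ring. Qed.

Lemma M2det_Jmat N1 N2 alpha : M2det (Jmat N1 N2 alpha) = M2det N2 * M2det N1.
Proof. destruct N1, N2. unfold M2det, Jmat, M2mul, Dmat; cbn. ring. Qed.

Lemma M2tr_Jmat_damped a b s t alpha : b <> 0 ->
  M2tr (Jmat (damped_flow a b s) (damped_flow a b t) alpha) =
  M2tr (M2mul (damped_flow a b t) (damped_flow a b s)) + alpha * damped_q a b (s + t).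
Proof.
  intro Hb. rewrite M2tr_Jmat, (damped_flow_add a b s t Hb).
  unfold damped_flow at 3. now rewrite companion_combE.
Qed.

Lemma limit_left0_sqrt_affine (f : R -> R) c0 c1 :
  (forall x, x < 0 -> f x = c0 * sqrt (- x) + c1) -> limit1_in f (fun x => x < 0) c1 0.
Proof.
  intros Hf eps Heps.
  set (A := Rabs c0 + 1).
  assert (HA : 0 < A) by (unfold A; generalize (Rabs_pos c0); lra).
  assert (HeA : 0 < eps / A) by (apply Rdiv_lt_0_compat; lra).
  exists ((eps / A) ^ 2). split; [now apply pow_lt|].
  intros x [Hx Hd]. simpl in *. unfold R_dist in *.
  rewrite Rminus_0_r, Rabs_left in Hd by exact Hx.
  rewrite Hf by exact Hx. replace (c0 * sqrt (- x) + c1 - c1) with (c0 * sqrt (- x)) by ring.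
  assert (Hs : sqrt (- x) < eps / A).
  { rewrite <- (sqrt_pow2 (eps / A)) by lra. apply sqrt_lt_1_alt. lra. }
  assert (Hs0 := sqrt_pos (- x)).
  rewrite Rabs_mult, (Rabs_right (sqrt (- x))) by lra.
  apply Rle_lt_trans with (A * sqrt (- x)); [apply Rmult_le_compat_r; unfold A; lra|].
  replace eps with (A * (eps / A)) by (field; lra).
  now apply Rmult_lt_compat_l.
Qed.

Lemma sin_period_neq_0 w0 wf : wf <> 0 ->
  (forall m : Z, w0 <> IZR m * wf / 2) -> sin (w0 * (2 * PI / wf)) <> 0.
Proof.
  intros Hwf Hm Hs. apply sin_eq_0_0 in Hs as [k Hk]. apply (Hm k).
  replace w0 with (w0 * (2 * PI / wf) * wf / (2 * PI))
    by (field; split; [exact Hwf | apply PI_neq0]).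
  rewrite Hk. field. apply PI_neq0.
Qed.

Theorem mainTheorem3 (wn zeta T s0 : R)
  (hwn : 0 < wn) (hz0 : 0 <= zeta) (hz1 : zeta < 1) (hT : 0 < T)
  (N1 N2 : M2)
  (hN1 : is_M2exp (M2scal s0 (sysA wn zeta)) N1)
  (hN2 : is_M2exp (M2scal (T - s0) (sysA wn zeta)) N2) :
  let w0 := wn * sqrt (1 - zeta ^ 2) in
  let coef := exp (- zeta * wn * T) * (sin (w0 * T) / w0) in
  (forall alpha : R,
     M2tr (Jmat N1 N2 alpha) = M2tr (M2mul N2 N1) + alpha * coef /\
     M2det (Jmat N1 N2 alpha) = M2det N2 * M2det N1 /\
     M2det N2 * M2det N1 = exp (- 2 * zeta * wn * T)) /\
  (forall wf : R,
     T = 2 * PI / wf ->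
     (forall m : Z, w0 <> IZR m * wf / 2) ->
     coef <> 0 /\
     (forall w2 h1 astar : R,
        w2 * h1 <> 0 -> 0 < astar ->
        let alpha := fun Hmin : R =>
          w2 * h1 * sqrt (2 * astar) / (2 * sqrt (- Hmin)) in
        (exists c : R, c <> 0 /\
           limit1_in (fun Hmin => M2tr (Jmat N1 N2 (alpha Hmin)) * sqrt (- Hmin))
                     (fun Hmin => Hmin < 0) c 0) /\
        (forall Hmin : R, Hmin < 0 ->
           M2det (Jmat N1 N2 (alpha Hmin)) = exp (- 2 * zeta * wn * T)))).
Proof.
  intros w0 coef.
  set (a := - zeta * wn).
  assert (Hw0 : w0 <> 0).
  { apply Rgt_not_eq, Rmult_lt_0_compat; [exact hwn | apply sqrt_lt_R0; nra]. }
  assert (HA : sysA wn zeta = companion (a ^ 2 + w0 ^ 2) (- 2 * a)).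
  { unfold sysA, companion, w0, a. f_equal; [|ring].
    rewrite (Rpow_mult_distr wn), pow2_sqrt by nra. ring. }
  rewrite HA in hN1, hN2.
  apply is_M2exp_damped in hN1, hN2; [|exact Hw0|exact Hw0]. subst N1 N2.
  assert (Hcoef_q : coef = damped_q a w0 (s0 + (T - s0))).
  { replace (s0 + (T - s0)) with T by ring. unfold coef, damped_q, a. field. exact Hw0. }
  assert (Hdet : M2det (damped_flow a w0 (T - s0)) * M2det (damped_flow a w0 s0)
                 = exp (- 2 * zeta * wn * T)).
  { rewrite !M2det_damped_flow, <- exp_plus by exact Hw0. f_equal. unfold a. ring. }
  split.
  { intro alpha. rewrite M2tr_Jmat_damped, <- Hcoef_q, M2det_Jmat by exact Hw0. auto. }
  intros wf HT Hm.
  assert (Hwf : wf <> 0).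
  { intro Hwf. rewrite Hwf in HT. unfold Rdiv in HT. rewrite Rinv_0 in HT. lra. }
  assert (Hcoef : coef <> 0).
  { unfold coef, Rdiv. repeat apply Rmult_integral_contrapositive_currified.
    - apply Rgt_not_eq, exp_pos.
    - rewrite HT. now apply sin_period_neq_0.
    - now apply Rinv_neq_0_compat. }
  split; [exact Hcoef|].
  intros w2 h1 astar Hwh Hastar alpha.
  split; [|intros Hmin _; rewrite M2det_Jmat; exact Hdet].
  exists (w2 * h1 * sqrt (2 * astar) / 2 * coef). split.
  - assert (0 < sqrt (2 * astar)) by (apply sqrt_lt_R0; lra).
    unfold Rdiv. apply Rmult_integral_contrapositive_currified; [|exact Hcoef].
    apply Rmult_integral_contrapositive_currified; [|lra].
    apply Rmult_integral_contrapositive_currified; [exact Hwh | lra].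
  - apply (limit_left0_sqrt_affine _
             (M2tr (M2mul (damped_flow a w0 (T - s0)) (damped_flow a w0 s0)))).
    intros x Hx. unfold alpha. rewrite M2tr_Jmat_damped, <- Hcoef_q by exact Hw0. field.
    apply Rgt_not_eq, sqrt_lt_R0. lra.
Qed.
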